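(* Let $R$ be a commutative ring. Let $A, A', N, N'$ be $R$-modules and let $\alpha : A \to N$, $\beta : N \to A$, $\alpha' : A' \to N'$ and $f : A \to A'$ be $R$-module morphisms. Let $V \subset N$ and $V' \subset N'$ be submodules such that $(\alpha' \circ f \circ \beta)(V) \subset V'$ and $(\alpha \circ \beta)(V) \subset V$. Suppose that the restriction $\alpha \circ \beta : V \to V$ is invertible. Then there exists a unique $R$-linear map $\tilde{f} : V \to V'$ such that $\tilde{f}(\alpha(x)) = \alpha'(f(x))$ for all $x \in \beta(V)$.
   Context: In the paper this is applied with $A = Z(M)$, $A' = Z(M')$, $f = Z(W)$ for a bordism $W : M \to M'$ and a TQFT $Z$ valued in $R$-modules, $\alpha = \alpha_M$, $\beta = \beta_M$, $\alpha' = \alpha_{M'}$, $V = V_M$, $V' = V_{M'}$; the statement above is the purely module-theoretic content. *)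

From HB Require Import structures.
From mathcomp Require Import all_boot all_order all_algebra.
Set Implicit Arguments. Unset Strict Implicit. Unset Printing Implicit Defensive.
Import GRing.Theory.
Local Open Scope ring_scope.

Definition linear_on (R : pzRingType) (N N' : lmodType R)
  (V : {pred N}) (V' : {pred N'}) (g : N -> N') : Prop :=
  {in V, forall v, g v \in V'} /\
  forall a : R, {in V &, forall u v, g (a *: u + v) = a *: g u + g v}.

From HB Require Import structures.
From mathcomp Require Import all_boot all_order all_algebra.
Import GRing.Theory.
Local Open Scope ring_scope.

(* The map is forced to be alpha' o f o beta o (alpha o beta |_V)^-1: existence
   is a composition of linear maps, and uniqueness holds because alpha o beta
   maps V onto V, so a map on V is determined by its values on alpha (beta V). *)

Lemma linear_on_comp (R : pzRingType) (N U N' : lmodType R)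
    (V : {pred N}) (W : {pred U}) (V' : {pred N'})
    (g : N -> U) (h : {linear U -> N'}) :
  linear_on V W g -> {in W, forall w, h w \in V'} -> linear_on V V' (h \o g).
Proof.
move=> [gVW glin] hWV'; split=> [v vV | a u v uV vV /=].
  exact/hWV'/gVW.
by rewrite glin // linearP.
Qed.

Lemma eq_in_precomp_onto (T T' : Type) (V : {pred T}) (p : T -> T)
    (h1 h2 : T -> T') :
  {in V, forall v, exists2 w, w \in V & v = p w} ->
  {in V, forall v, h1 (p v) = h2 (p v)} -> {in V, h1 =1 h2}.
Proof. by move=> pV h12 v /pV[w wV ->]; apply: h12. Qed.

Theorem mainTheorem1 (R : comPzRingType) (A A' N N' : lmodType R)
  (alpha : {linear A -> N}) (beta : {linear N -> A})
  (alpha' : {linear A' -> N'}) (f : {linear A -> A'})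
  (V : {pred N}) (V' : {pred N'})
  (hV : submod_closed V) (hV' : submod_closed V')
  (hfV : {in V, forall v, alpha' (f (beta v)) \in V'})
  (habV : {in V, forall v, alpha (beta v) \in V})
  (hinv : exists g : N -> N, linear_on V V g /\
      {in V, forall v, [/\ g v \in V, alpha (beta (g v)) = v
                              & g (alpha (beta v)) = v]}) :
  exists ft : N -> N',
    [/\ linear_on V V' ft,
        {in V, forall v, ft (alpha (beta v)) = alpha' (f (beta v))}
      & forall g : N -> N',
          linear_on V V' g ->
          {in V, forall v, g (alpha (beta v)) = alpha' (f (beta v))} ->
          {in V, g =1 ft}].
Proof.
case: hinv => g [glin gP].
pose ft := alpha' \o f \o beta \o g.
have ftK : {in V, forall v, ft (alpha (beta v)) = alpha' (f (beta v))}.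
  by move=> v /gP[_ _ gK]; rewrite /ft /= gK.
have abV_onto : {in V, forall v, exists2 w, w \in V & v = alpha (beta w)}.
  by move=> v /gP[gvV abg _]; exists (g v).
exists ft; split=> //; first exact: linear_on_comp glin hfV.
move=> h _ hK; apply: eq_in_precomp_onto abV_onto _ => v vV.
by rewrite hK // ftK.
Qed.
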